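(* For every integer $a\ge1$ and every $x\in\mathbb R$, \[ \int_{-1/2}^{1/2}\log|x^a-y^a|\,dy\ \ge\ -a(2\log2+1). \] *)

From mathcomp Require Import all_boot all_order all_algebra.
From mathcomp Require Import all_classical all_reals all_analysis.

From mathcomp Require Import all_boot all_order all_algebra.
From mathcomp Require Import all_classical all_reals all_analysis.
From mathcomp Require Import measurable_realfun.
From mathcomp Require Import ring lra.
Set Implicit Arguments.
Unset Strict Implicit.
Unset Printing Implicit Defensive.
Import Order.TTheory GRing.Theory Num.Theory.
Local Open Scope classical_set_scope.
Local Open Scope ring_scope.

(* Since | |x|^a - |y|^a | >= | |x| - |y| |^a, the negative part of
   ln |x^a - y^a| is at most a * (- ln | |y| - m |) with m = min (|x|, 1/2),
   except at |y| = m.  Splitting [-1/2, 1/2] at 0 and at -m, m, the integral of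
   - ln | |y| - m | becomes four improper integrals of - ln t over intervals of
   lengths p, q, q, p with p + q = 1/2, each equal to G(l) = l - l ln l.  By
   concavity of G the sum is at most 4 G(1/4) = 2 ln 2 + 1. *)

Lemma exprSn_superadditive (R : realDomainType) (p q : R) n :
  0 <= p -> 0 <= q -> p ^+ n.+1 + q ^+ n.+1 <= (p + q) ^+ n.+1.
Proof.
move=> p0 q0; elim: n => [|n IH]; first by rewrite !expr1.
rewrite [(p + q) ^+ n.+2]exprS.
apply: le_trans (ler_wpM2l (addr_ge0 p0 q0) IH).
rewrite mulrDl !mulrDr -!exprS.
have pq0 : 0 <= p * q ^+ n.+1 by rewrite mulr_ge0 ?exprn_ge0.
have qp0 : 0 <= q * p ^+ n.+1 by rewrite mulr_ge0 ?exprn_ge0.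
lra.
Qed.

Lemma ler_dist_normr_exprSn (R : realDomainType) (x y : R) n :
  `| `|x| - `|y| | ^+ n.+1 <= `|x ^+ n.+1 - y ^+ n.+1|.
Proof.
apply: le_trans (ler_dist_dist _ _); rewrite !normrX.
wlog yx : x y / `|y| <= `|x|.
  move=> H; have [|/ltW] := leP `|y| `|x|; first exact: H.
  by rewrite distrC (distrC (`|x| ^+ n.+1)); apply: H.
have d0 : 0 <= `|x| - `|y| by rewrite subr_ge0.
rewrite (ger0_norm d0) [X in _ <= X]ger0_norm; last by rewrite subr_ge0 lerXn2r ?nnegrE.
have := exprSn_superadditive n d0 (normr_ge0 y); rewrite subrK; lra.
Qed.

Lemma ler_dist_minr (R : realDomainType) (x t h : R) :
  t <= h -> `|t - Num.min x h| <= `|x - t|.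
Proof.
move=> th; rewrite /Num.min; case: ifPn => [_|]; first by rewrite distrC.
rewrite -leNgt => hx; rewrite distrC !ger0_norm ?subr_ge0 ?(le_trans th) //.
by rewrite lerD2r.
Qed.

Lemma minr_normr_itv (R : realDomainType) (x h : R) :
  0 <= h -> 0 <= Num.min `|x| h <= h.
Proof. by move=> h0; rewrite le_min ge_min normr_ge0 h0 lexx orbT. Qed.

Section log_bounds.
Variable R : realType.

Lemma lnN_dist_exprn_le (a : nat) (x y d : R) : (0 < a)%N -> 0 < d -> d <= 1 ->
  d <= `| `|x| - `|y| | -> Num.max (- ln `|x ^+ a - y ^+ a|) 0 <= a%:R * - ln d.
Proof.
case: a => // a _ d0 d1 dxy.
have lnd_ge0 : 0 <= a.+1%:R * - ln d by rewrite mulr_ge0 // oppr_ge0 ln_le0.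
rewrite ge_max lnd_ge0 andbT mulrN lerN2 mulr_natl -lnXn //.
have dXn_gt0 : 0 < d ^+ a.+1 by rewrite exprn_gt0.
have dXn_le : d ^+ a.+1 <= `|x ^+ a.+1 - y ^+ a.+1|.
  apply: le_trans (ler_dist_normr_exprSn x y a).
  by rewrite lerXn2r ?nnegrE ?(ltW d0) ?(le_trans (ltW d0)).
by rewrite ler_ln ?posrE // (lt_le_trans dXn_gt0).
Qed.

Definition lnN_primitive (t : R) : R := t - t * ln t.

Lemma lnN_primitive0 : lnN_primitive 0 = 0.
Proof. by rewrite /lnN_primitive mul0r subrr. Qed.

Lemma lnN_primitive_ge0 (t : R) : 0 <= t -> t <= 1 -> 0 <= lnN_primitive t.
Proof.
move=> t0 t1; have : t * ln t <= 0 by rewrite mulr_ge0_le0 ?ln_le0.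
rewrite /lnN_primitive; lra.
Qed.

Lemma is_derive_lnN_primitive (t : R) : 0 < t ->
  is_derive t 1 lnN_primitive (- ln t).
Proof.
move=> t0.
have := is_deriveB (is_derive_id t 1) (is_deriveM (is_derive_id t 1) (is_derive1_ln t0)).
congr is_derive; rewrite /GRing.scale /= mulr1 mulfV ?gt_eqF //; ring.
Qed.

(* The right-hand side is the tangent line of [lnN_primitive] at [c]. *)
Lemma lnN_primitive_le_tangent (c t : R) : 0 < c -> 0 <= t ->
  lnN_primitive t <= c - t * ln c.
Proof.
rewrite /lnN_primitive le_eqVlt => c0 /predU1P[<-|t0]; first by rewrite !mul0r; lra.
have h : ln (c / t) <= c / t - 1.
  rewrite -{1}(subrK 1 (c / t)) addrC le_ln1Dx // ltrBrDl subrr divr_gt0 //.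
have := ler_wpM2l (ltW t0) h.
rewrite ln_div ?posrE // !mulrBr mulr1 mulrCA mulfV ?gt_eqF // mulr1; lra.
Qed.

Lemma lnN_primitive_add_le (p q : R) : 0 <= p -> 0 <= q -> p + q = 2^-1 ->
  lnN_primitive p + lnN_primitive q <= ln 2 + 2^-1.
Proof.
move=> p0 q0 pq.
have ln4 : ln (4^-1 : R) = - (2 * ln 2).
  have -> : (4 : R) = 2 ^+ 2 by rewrite expr2; lra.
  by rewrite lnV ?posrE ?exprn_gt0 // lnXn // mulr_natl.
have c0 : 0 < 4^-1 :> R by rewrite invr_gt0.
have := lnN_primitive_le_tangent c0 p0; have := lnN_primitive_le_tangent c0 q0.
have : p * ln 2 + q * ln 2 = 2^-1 * ln 2 by rewrite -mulrDl pq.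
rewrite ln4; lra.
Qed.

End log_bounds.

Lemma derivable_cc_LRcontinuous (R : realType) (F : R -> R) (a b : R) : a <= b ->
  {in `[a, b], forall y, derivable F y 1} -> derivable_oo_LRcontinuous F a b.
Proof.
move=> ab dF; split.
- by move=> y /[!in_itv] /= /andP[ay yb]; apply: dF; rewrite in_itv /= !ltW.
- apply: cvg_at_right_filter; apply: differentiable_continuous.
  by apply/derivable1_diffP/dF; rewrite in_itv /= lexx ab.
- apply: cvg_at_left_filter; apply: differentiable_continuous.
  by apply/derivable1_diffP/dF; rewrite in_itv /= lexx ab.
Qed.

Lemma exists_divrSSn_le (R : archiRealFieldType) (s e : R) :
  0 < e -> exists n, s / n.+2%:R <= e.
Proof.
move=> e0; exists (Num.truncn (s / e)).
rewrite ler_pdivrMr ?ltr0n // -ler_pdivrMl // mulrC.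
by apply/ltW/(lt_le_trans (truncnS_gt _)); rewrite ler_nat.
Qed.

Lemma ge0_integral_bigcup_le d (T : measurableType d) (R : realType)
    (mu : {measure set T -> \bar R}) (F : (set T)^nat) (f : T -> \bar R)
    (B : \bar R) :
  nondecreasing_seq F -> (forall n, measurable (F n)) ->
  measurable_fun (\bigcup_n F n) f -> (forall x, (\bigcup_n F n) x -> (0 <= f x)%E) ->
  (forall n, (\int[mu]_(x in F n) f x <= B)%E) ->
  (\int[mu]_(x in \bigcup_n F n) f x <= B)%E.
Proof.
move=> ndF mF mf f0 FB.
have cvF := @ge0_nondecreasing_set_cvg_integral _ _ _ F f mu ndF mF
  (fun n => measurable_funS (bigcup_measurable (fun n _ => mF n)) (@bigcup_sup _ _ n _ _ I) mf)
  (fun n x Fnx => f0 x (ex_intro2 _ _ n I Fnx)).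
rewrite -(cvg_lim _ cvF) //; apply: lime_le; last exact: nearW.
by apply/cvg_ex; eexists; exact: cvF.
Qed.

Lemma ge0_integral_le_punctured (R : realType) (D : set R) (c s : R)
    (I : R -> set R) (f : R -> \bar R) (B : \bar R) :
  0 < s -> measurable D -> (forall e, measurable (I e)) ->
  (forall e, 0 < e -> I e `<=` D) ->
  (forall e e', 0 < e -> e <= e' -> I e' `<=` I e) ->
  (forall y, D y -> y <> c -> exists2 e, 0 < e & I e y) ->
  measurable_fun D f -> (forall y, D y -> (0 <= f y)%E) ->
  (forall e, 0 < e < s -> (\int[lebesgue_measure]_(y in I e) f y <= B)%E) ->
  (\int[lebesgue_measure]_(y in D) f y <= B)%E.
Proof.
move=> s0 mD mI ID Ianti DI mf f0 IB.
pose F n := I (s / n.+2%:R).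
have e_gt0 n : 0 < s / n.+2%:R by rewrite divr_gt0.
have mF n : measurable (F n) := mI _.
have FD : \bigcup_n F n `<=` D by move=> y [n _]; exact: ID.
rewrite (ge0_negligible_integral _ _ _ _ (lebesgue_measure_set1 c)) //.
apply: le_trans (ge0_integral_bigcup_le (mu := lebesgue_measure) (F := F) (f := f)
  _ _ _ _ _) => //.
- apply: ge0_subset_integral => //; first exact: measurableD.
  + exact: bigcup_measurable (fun n _ => mF n).
  + exact: measurable_funS mf.
  + by move=> y /FD /f0.
  + move=> y [Dy /= yc]; have [e e0 Iey] := DI y Dy yc.
    have [n sn_le] := exists_divrSSn_le s e0.
    by exists n => //; exact: Ianti Iey.
- move=> n m nm; apply/subsetPset/Ianti => //.
  by rewrite ler_pM2l // lef_pV2 ?posrE ?ltr0n // ler_nat.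
- exact: measurable_funS mf.
- by move=> y /FD /f0.
- move=> n; apply: IB; rewrite e_gt0 ltr_pdivrMr ?ltr0n //.
  by rewrite -{1}(mulr1 s) ltr_pM2l // ltr1n.
Qed.

Section lnN_integrals.
Variable R : realType.
Notation mu := (@lebesgue_measure R).
Local Open Scope ereal_scope.

Lemma integral_lnN_shift (c e s : R) : (0 < e)%R -> (e < s)%R ->
  \int[mu]_(y in `[(c + e)%R, (c + s)%R]) (- ln (y - c))%:E =
  (lnN_primitive s - lnN_primitive e)%:E.
Proof.
move=> e0 es; have ce : (c < c + e)%R by rewrite ltrDl.
have dF y : (c < y)%R ->
    is_derive y 1%R (fun z => lnN_primitive (z - c)) (- ln (y - c))%R.
  rewrite -subr_gt0 => yc; have := @is_derive1_comp R (@lnN_primitive R) (fun z => z - c)%R y _ _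
    (is_derive_lnN_primitive yc)
    (is_deriveB (is_derive_id y 1%R) (is_derive_cst c y 1%R)).
  by rewrite subr0 mulr1.
rewrite (@continuous_FTC2 _ _ (fun z => lnN_primitive (z - c))).
- by rewrite !(addrC c) !addrK -EFinB.
- by rewrite ltrD2l.
- have : {within `[c + e, c + s], continuous (fun z => - ln (z - c))}%R; last exact.
  apply: continuous_in_subspaceT => y; rewrite inE /= in_itv /= => /andP[ey _].
  apply: cvgN; apply: continuous_comp; first by apply: cvgD; [exact: cvg_id|exact: cvg_cst].
  by apply: continuous_ln; rewrite subr_gt0 (lt_le_trans ce).
- apply: derivable_cc_LRcontinuous; first by rewrite lerD2l ltW.
  by move=> y /[!in_itv] /= /andP[ey _]; have [] := dF y (lt_le_trans ce ey).
- move=> y /[!in_itv] /= /andP[ey _]; rewrite derive1E.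
  by have [_ ->] := dF y (lt_trans ce ey).
Qed.

Lemma integral_lnN_reflect (c e s : R) : (0 < e)%R -> (e < s)%R ->
  \int[mu]_(y in `[(c - s)%R, (c - e)%R]) (- ln (c - y))%:E =
  (lnN_primitive s - lnN_primitive e)%:E.
Proof.
move=> e0 es; rewrite -(opprB s c) -(opprB e c) integration_by_substitution_oppr.
- rewrite -(integral_lnN_shift (- c)%R) // !(addrC (- c)%R).
  by apply: eq_integral => y _; rewrite /= !opprK addrC.
- by rewrite lerD2r ltW.
- rewrite !opprB.
  have : {within `[c - s, c - e], continuous (fun z => - ln (c - z))}%R; last exact.
  apply: continuous_in_subspaceT => y; rewrite inE /= in_itv /= => /andP[_ ye].
  apply: cvgN; apply: continuous_comp; first by apply: cvgB; [exact: cvg_cst|exact: cvg_id].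
  by apply: continuous_ln; rewrite subr_gt0 (le_lt_trans ye) // ltrBlDr ltrDl.
Qed.

Lemma measurable_lnN (h : R -> R) : measurable_fun setT h ->
  measurable_fun setT (fun y => (- ln (h y))%:E).
Proof.
move=> mh; apply/measurable_EFinP; apply: measurable_funN.
by apply: measurableT_comp; [exact: measurable_ln | exact: mh].
Qed.

Lemma integral_lnN_shift_le (c s : R) : (0 <= s <= 1)%R ->
  \int[mu]_(y in `[c, (c + s)%R]) (- ln (y - c))%:E <= (lnN_primitive s)%:E.
Proof.
move=> /andP[]; rewrite le_eqVlt => /predU1P[<- _|s0 s1].
  rewrite lnN_primitive0 (@integral_Sset1 _ _ _ c) // => y /=.
  by rewrite in_itv /= addr0 => /andP[cy yc]; apply/eqP; rewrite eq_le cy yc.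
apply: (ge0_integral_le_punctured (c := c) (s := s)
  (I := fun e => `[(c + e)%R, (c + s)%R]%classic)) => //.
- move=> e e0 y /=; rewrite !in_itv /= => /andP[ey ->]; rewrite andbT.
  by apply: le_trans ey; rewrite lerDl ltW.
- move=> e e' e0 ee' y /=; rewrite !in_itv /= => /andP[ey ->]; rewrite andbT.
  by apply: le_trans ey; rewrite lerD2l.
- move=> y /=; rewrite in_itv /= => /andP[cy ys] yc.
  exists (y - c)%R; last by rewrite /= in_itv /= addrC subrK lexx ys.
  by rewrite subr_gt0 lt_neqAle cy andbT eq_sym; apply/eqP.
- apply: measurable_funTS; apply: measurable_lnN.
  exact: measurable_funB.
- move=> y /=; rewrite in_itv /= => /andP[cy ys]; rewrite lee_fin oppr_ge0 ln_le0 //.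
  by rewrite lerBlDl (le_trans ys) // lerD2l.
- move=> e /andP[e0 es]; rewrite integral_lnN_shift // lee_fin lerBlDr lerDl.
  by rewrite lnN_primitive_ge0 // ltW // (lt_le_trans es).
Qed.

Lemma integral_lnN_reflect_le (c s : R) : (0 <= s <= 1)%R ->
  \int[mu]_(y in `[(c - s)%R, c]) (- ln (c - y))%:E <= (lnN_primitive s)%:E.
Proof.
move=> /andP[]; rewrite le_eqVlt => /predU1P[<- _|s0 s1].
  rewrite lnN_primitive0 (@integral_Sset1 _ _ _ c) // => y /=.
  by rewrite in_itv /= subr0 => /andP[cy yc]; apply/eqP; rewrite eq_le cy yc.
apply: (ge0_integral_le_punctured (c := c) (s := s)
  (I := fun e => `[(c - s)%R, (c - e)%R]%classic)) => //.
- move=> e e0 y /=; rewrite !in_itv /= => /andP[-> ye] /=.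
  by apply: le_trans ye _; rewrite gerBl ltW.
- move=> e e' e0 ee' y /=; rewrite !in_itv /= => /andP[-> ye] /=.
  by apply: le_trans ye _; rewrite lerD2l lerN2.
- move=> y /=; rewrite in_itv /= => /andP[sy yc] cy.
  exists (c - y)%R; last by rewrite /= in_itv /= sy opprB addrC subrK lexx.
  by rewrite subr_gt0 lt_neqAle yc andbT; apply/eqP.
- apply: measurable_funTS; apply: measurable_lnN.
  exact: measurable_funB.
- move=> y /=; rewrite in_itv /= => /andP[sy yc]; rewrite lee_fin oppr_ge0 ln_le0 //.
  by apply: le_trans s1; rewrite lerBlDr -lerBlDl.
- move=> e /andP[e0 es]; rewrite integral_lnN_reflect // lee_fin lerBlDr lerDl.
  by rewrite lnN_primitive_ge0 // ltW // (lt_le_trans es).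
Qed.

Lemma integral_lnN_dist_le (u c : R) : (u <= c <= u + 2^-1)%R ->
  \int[mu]_(y in `[u, (u + 2^-1)%R]) (- ln `|y - c|)%:E <= (ln 2 + 2^-1)%:E.
Proof.
move=> /andP[uc cu].
have mf : measurable_fun setT (fun y : R => (- ln `|y - c|)%:E).
  apply: measurable_lnN; apply: measurableT_comp; first exact: normr_measurable.
  exact: measurable_funB.
have f0 (y : R) : `[u, (u + 2^-1)%R]%classic y -> 0 <= (- ln `|y - c|)%:E.
  rewrite /= in_itv /= lee_fin oppr_ge0 => /andP[uy yu]; apply: ln_le0.
  by rewrite ler_norml; apply/andP; split; lra.
rewrite (@itv_bndbnd_setU _ _ _ (BRight c)) ?bnd_simp //.
rewrite ge0_integral_setU //; last 3 first.
- exact: measurable_funTS.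
- by rewrite -itv_bndbnd_setU ?bnd_simp.
- apply/disj_setPS => y [/=]; rewrite !in_itv /= => /andP[_ yc] /andP[cy _].
  by have := lt_le_trans cy yc; rewrite ltxx.
have left_le : \int[mu]_(y in `[u, c]) (- ln `|y - c|)%:E <= (lnN_primitive (c - u))%:E.
  rewrite {1}(_ : u = c - (c - u))%R; last by ring.
  under eq_integral => y /[!inE] /= /[!in_itv] /= /andP[_ yc] do
    rewrite distrC ger0_norm ?subr_ge0 //.
  by apply: integral_lnN_reflect_le; apply/andP; split; lra.
have right_le : \int[mu]_(y in `]c, (u + 2^-1)%R]) (- ln `|y - c|)%:E <=
    (lnN_primitive (u + 2^-1 - c))%:E.
  rewrite integral_itv_obnd_cbnd; last exact: measurable_funTS.
  rewrite {1}(_ : u + 2^-1 = c + (u + 2^-1 - c))%R; last by ring.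
  under eq_integral => y /[!inE] /= /[!in_itv] /= /andP[cy _] do
    rewrite ger0_norm ?subr_ge0 //.
  by apply: integral_lnN_shift_le; apply/andP; split; lra.
apply: le_trans (leeD left_le right_le) _.
by rewrite -EFinD lee_fin lnN_primitive_add_le //; lra.
Qed.

Lemma integral_lnN_dist_normr_le (m : R) : (0 <= m <= 2^-1)%R ->
  \int[mu]_(y in `[(- 2^-1)%R, (2^-1)%R]) (- ln `| `|y| - m|)%:E <=
  (2 * ln 2 + 1)%:E.
Proof.
move=> /andP[m0 m1].
have mg : measurable_fun setT (fun y : R => (- ln `| `|y| - m|)%:E).
  apply: measurable_lnN; apply: measurableT_comp; first exact: normr_measurable.
  by apply: measurable_funB; [exact: normr_measurable | exact: measurable_cst].
have g0 (y : R) : `[(- 2^-1)%R, (2^-1)%R]%classic y -> 0 <= (- ln `| `|y| - m|)%:E.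
  rewrite /= in_itv /= lee_fin oppr_ge0 => /andP[y1 y2]; apply: ln_le0.
  have yn : (`|y| <= 2^-1)%R by rewrite ler_norml y1 y2.
  by rewrite ler_norml; have := normr_ge0 y; move=> ?; apply/andP; split; lra.
rewrite (@itv_bndbnd_setU _ _ _ (BLeft 0%R)) ?bnd_simp ?oppr_le0 //.
rewrite ge0_integral_setU //; last 3 first.
- exact: measurable_funTS.
- by rewrite -itv_bndbnd_setU ?bnd_simp ?oppr_le0.
- apply/disj_setPS => y [/=]; rewrite !in_itv /= => /andP[_ y0] /andP[/lt_le_trans].
  by move=> /(_ _ y0); rewrite ltxx.
have left_le : \int[mu]_(y in `[(- 2^-1)%R, 0%R[) (- ln `| `|y| - m|)%:E <=
    (ln 2 + 2^-1)%:E.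
  rewrite integral_itv_bndo_bndc; last exact: measurable_funTS.
  under eq_integral => y /[!inE] /= /[!in_itv] /= /andP[_ y0] do
    rewrite (ler0_norm y0) -opprD normrN -{1}(opprK m).
  rewrite [X in `[_, X]](_ : 0 = - 2^-1 + 2^-1)%R; last by rewrite addNr.
  by apply: integral_lnN_dist_le; apply/andP; split; lra.
have right_le : \int[mu]_(y in `[0%R, (2^-1)%R]) (- ln `| `|y| - m|)%:E <=
    (ln 2 + 2^-1)%:E.
  under eq_integral => y /[!inE] /= /[!in_itv] /= /andP[y0 _] do
    rewrite (ger0_norm y0).
  rewrite {1}(_ : 2^-1 = 0 + 2^-1)%R; last by rewrite add0r.
  by apply: integral_lnN_dist_le; apply/andP; split; lra.
apply: le_trans (leeD left_le right_le) _.
by rewrite -EFinD lee_fin; lra.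
Qed.

End lnN_integrals.

Lemma integral_ge_oppe_funeneg d (T : measurableType d) (R : realType)
    (mu : {measure set T -> \bar R}) (D : set T) (f : T -> \bar R) (B : \bar R) :
  (\int[mu]_(x in D) f^\- x <= B)%E -> (- B <= \int[mu]_(x in D) f x)%E.
Proof.
move=> fB; rewrite integralE.
have f0 : (0 <= \int[mu]_(x in D) f^\+ x)%E.
  by apply: integral_ge0 => x _; exact: funepos_ge0.
by have := leeB f0 fB; rewrite sub0e.
Qed.

Section exprn_log_integral.
Variable R : realType.
Notation mu := (@lebesgue_measure R).

Lemma funeneg_ln_dist_exprn_le (a : nat) (x y : R) : (0 < a)%N ->
  `|y| <= 2^-1 -> `|y| != Num.min `|x| 2^-1 ->
  ((fun z => (ln `|x ^+ a - z ^+ a|)%:E)^\- y <=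
   (a%:R * - ln `| `|y| - Num.min `|x| 2^-1|)%:E)%E.
Proof.
set m := Num.min `|x| 2^-1 => a0 y1 ym.
have /andP[m0 m1] : 0 <= m <= 2^-1 by rewrite minr_normr_itv.
rewrite funenegE -EFinN -EFin_max lee_fin.
apply: lnN_dist_exprn_le => //.
- by rewrite normr_gt0 subr_eq0.
- by rewrite ler_norml; have := normr_ge0 y; move=> ?; apply/andP; split; lra.
- exact: ler_dist_minr.
Qed.

Lemma integral_funeneg_ln_dist_exprn_le (a : nat) (x : R) : (0 < a)%N ->
  (\int[mu]_(y in `[(- 2^-1)%R, (2^-1)%R]) (fun z => (ln `|x ^+ a - z ^+ a|)%:E)^\- y <=
   (a%:R * (2 * ln 2 + 1))%:E)%E.
Proof.
move=> a0; set m := Num.min `|x| 2^-1.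
have /andP[m0 m1] : 0 <= m <= 2^-1 by rewrite minr_normr_itv.
have mf : measurable_fun setT (fun y : R => (ln `|x ^+ a - y ^+ a|)%:E).
  apply/measurable_EFinP; apply: measurableT_comp; first exact: measurable_ln.
  apply: measurableT_comp; first exact: normr_measurable.
  by apply: measurable_funB; [exact: measurable_cst | exact: measurable_funX].
have mg : measurable_fun setT (fun y : R => (- ln `| `|y| - m|)%:E).
  apply: measurable_lnN; apply: measurableT_comp; first exact: normr_measurable.
  by apply: measurable_funB; [exact: normr_measurable | exact: measurable_cst].
have y_half (y : R) : `[(- 2^-1)%R, 2^-1%R]%classic y -> `|y| <= 2^-1.
  by rewrite /= in_itv /= ler_norml.
have g0 (y : R) : `[(- 2^-1)%R, 2^-1%R]%classic y -> (0 <= (- ln `| `|y| - m|)%:E)%E.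
  move=> /y_half y1; rewrite lee_fin oppr_ge0 ln_le0 // ler_norml.
  by have := normr_ge0 y; move=> ?; apply/andP; split; lra.
apply: (@le_trans _ _
  (\int[mu]_(y in `[(- 2^-1)%R, (2^-1)%R]) (a%:R%:E * (- ln `| `|y| - m|)%:E))%E).
  apply: ae_ge0_le_integral => //.
  - by apply: measurable_funeneg; exact: measurable_funTS.
  - by move=> y /g0; apply: mule_ge0.
  - by apply: emeasurable_funM; [exact: measurable_cst | exact: measurable_funTS].
  have N1 (r : R) : mu.-negligible [set r].
    by exists [set r]; split => //; exact: lebesgue_measure_set1.
  apply: negligibleS (negligibleU (N1 m) (N1 (- m))) => y /= /not_implyP[/y_half y1].
  have [ym|ym] := eqVneq `|y| m; last first.
    by rewrite -EFinM => /negP; rewrite funeneg_ln_dist_exprn_le.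
  move=> _; move: ym; have [y0|y0] := leP 0 y.
    by rewrite ger0_norm // => ->; left.
  by rewrite ltr0_norm // => <-; right; rewrite opprK.
rewrite ge0_integralZl_EFin //; last exact: measurable_funTS.
rewrite EFinM lee_wpmul2l ?lee_fin //.
by apply: integral_lnN_dist_normr_le; rewrite m0 m1.
Qed.

End exprn_log_integral.

Theorem mainTheorem6 (R : realType) (a : nat) (x : R) : (1 <= a)%N ->
  ((- (a%:R * (2 * ln (2 : R) + 1)))%:E <=
   \int[(@lebesgue_measure R)]_(y in `[(- 2^-1)%R, (2^-1)%R])
      (ln `|x ^+ a - y ^+ a|%R)%:E)%E.
Proof.
move=> a1; rewrite EFinN; apply: integral_ge_oppe_funeneg.
exact: integral_funeneg_ln_dist_exprn_le.
Qed.
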